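(* Let $K$ be a kernel as below, $\mathbf{n}=(n_1,\dots,n_d)\in\mathbb{N}^d$, and suppose $\rho_{\mathbf{j}}(\mathbf{0})\ne0$ for all $\mathbf{j}\in\Omega_{\mathbf{n}}$. Then $\dim SK(\Lambda_{\mathbf{n}})=N=2^dn_1n_2\cdots n_d$. In particular, if $n_1=\dots=n_d=n$ then $\dim SK(\Lambda_{\mathbf{n}})=(2n)^d$.
   Context: $\mathbb{T}^d=(\mathbb{R}/2\pi\mathbb{Z})^d$. Kernel: $K(\mathbf{x})=\sum_{\mathbf{l}\in\mathbb{Z}^d}a_{\mathbf{l}}e^{i\mathbf{l}\cdot\mathbf{x}}$ with $(a_{\mathbf{l}})$ real, $a_{\mathbf{l}}=a_{-\mathbf{l}}$, $\sum_{\mathbf{l}}|a_{\mathbf{l}}|<\infty$. Notation: $\mathbf{x}\cdot\mathbf{y}=\sum_ix_iy_i$; $\mathbf{x}_{\mathbf{k}}=(\pi k_1/n_1,\dots,\pi k_d/n_d)$ for $\mathbf{k}\in\mathbb{Z}^d$, $\Omega_{\mathbf{n}}=\{\mathbf{j}\in\mathbb{Z}^d:0\le j_l\le 2n_l-1\}$, $\Lambda_{\mathbf{n}}=\{\mathbf{x}_{\mathbf{k}}:\mathbf{k}\in\Omega_{\mathbf{n}}\}$, $N=2^dn_1\cdots n_d$. For $\mathbf{j}\in\mathbb{Z}^d$: $\rho_{\mathbf{j}}(\mathbf{x})=\frac{2}{N}\sum_{\mathbf{k}\in\Omega_{\mathbf{n}}}\cos(\mathbf{j}\cdot\mathbf{x}_{\mathbf{k}})K(\mathbf{x}-\mathbf{x}_{\mathbf{k}})$.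 An sk-spline on $\Lambda_{\mathbf{n}}$ (associated with $K$) is a function $s(\mathbf{x})=c+\sum_{\mathbf{k}\in\Omega_{\mathbf{n}}}c_{\mathbf{k}}K(\mathbf{x}-\mathbf{x}_{\mathbf{k}})$ with $c,c_{\mathbf{k}}\in\mathbb{R}$ and $\sum_{\mathbf{k}\in\Omega_{\mathbf{n}}}c_{\mathbf{k}}=0$; $SK(\Lambda_{\mathbf{n}})$ is the real vector space of these. *)

From Stdlib Require Import Reals.
From mathcomp Require Import all_boot.

Set Implicit Arguments.
Unset Strict Implicit.
Unset Printing Implicit Defensive.

Local Open Scope R_scope.

Notation "\rsum_ ( i : T ) F" := (\big[Rplus/R0]_(i : T) F)
  (at level 41, F at level 41, i, T at level 50).
Notation "\rsum_ ( i < n ) F" := (\big[Rplus/R0]_(i < n) F)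
  (at level 41, F at level 41, i, n at level 50).

(* Points of R^d (representing T^d = (R/2piZ)^d) : functions 'I_d -> R. *)
Definition vsub (d : nat) (x y : 'I_d -> R) : 'I_d -> R := fun i => x i - y i.
Definition vzero (d : nat) : 'I_d -> R := fun _ => 0.

Definition dotZ (d : nat) (l : 'I_d -> Z) (x : 'I_d -> R) : R :=
  \rsum_(i < d) (IZR (l i) * x i).

Definition boxidx (d M : nat) (t : {ffun 'I_d -> 'I_(2 * M + 1)}) : 'I_d -> Z :=
  fun i => (Z.of_nat (nat_of_ord (t i)) - Z.of_nat M)%Z.

Definition box_sum (d M : nat) (f : ('I_d -> Z) -> R) : R :=
  \rsum_(t : {ffun 'I_d -> 'I_(2 * M + 1)}) f (boxidx t).

(* K(x) = sum_{l in Z^d} a_l e^{i l.x}, a_l real, a_l = a_{-l}, sum |a_l| < oo.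
   Since a is real and even, the imaginary parts cancel and the (absolutely
   convergent) series equals sum_l a_l cos(l.x); the sum of an absolutely
   summable family equals the limit of its cube partial sums. *)
Definition is_kernel (d : nat) (a : ('I_d -> Z) -> R) (K : ('I_d -> R) -> R) : Prop :=
  (forall l, a (fun i => (- l i)%Z) = a l) /\
  (exists B, forall M, box_sum M (fun l => Rabs (a l)) <= B) /\
  (forall x, Un_cv (fun M => box_sum M (fun l => a l * cos (dotZ l x))) (K x)).

Definition Omega (d : nat) (n : 'I_d -> nat) : finType :=
  {dffun forall i : 'I_d, 'I_(2 * n i)}.

Definition xk (d : nat) (n : 'I_d -> nat) (k : Omega n) : 'I_d -> R :=
  fun i => PI * INR (nat_of_ord (k i)) / INR (n i).

Definition dotN (d : nat) (n : 'I_d -> nat) (j : Omega n) (x : 'I_d -> R) : R :=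
  \rsum_(i < d) (INR (nat_of_ord (j i)) * x i).

Definition Ncard (d : nat) (n : 'I_d -> nat) : nat :=
  (2 ^ d * \prod_(i < d) n i)%N.

Definition rho (d : nat) (n : 'I_d -> nat) (K : ('I_d -> R) -> R)
    (j : Omega n) (x : 'I_d -> R) : R :=
  2 / INR (Ncard n) * \rsum_(k : Omega n) (cos (dotN j (xk k)) * K (vsub x (xk k))).

Definition SK (d : nat) (n : 'I_d -> nat) (K : ('I_d -> R) -> R)
    (s : ('I_d -> R) -> R) : Prop :=
  exists (c : R) (ck : Omega n -> R),
    \rsum_(k : Omega n) ck k = 0 /\
    forall x, s x = c + \rsum_(k : Omega n) (ck k * K (vsub x (xk k))).

Definition has_dim (X : Type) (V : (X -> R) -> Prop) (m : nat) : Prop :=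
  exists b : 'I_m -> (X -> R),
    (forall i, V (b i)) /\
    (forall lam : 'I_m -> R,
        (forall x, \rsum_(i < m) (lam i * b i x) = 0) -> forall i, lam i = 0) /\
    (forall f, V f -> exists lam : 'I_m -> R,
        forall x, f x = \rsum_(i < m) (lam i * b i x)).

(* The grid is the group Z/2n_1 x ... x Z/2n_d embedded in the torus, and
   [K] is even and 2pi-periodic in each variable, so convolution with [K] on
   the grid is diagonalised by the characters [cos (j . x)] and [sin (j . x)],
   the eigenvalue being [N/2 rho_j(0)].  If [c + sum_k c_k K(x - x_k)]
   vanishes identically with [sum_k c_k = 0], summing over the grid points
   gives [c = 0]; then each discrete Fourier coefficient of [(c_k)] is
   annihilated by a nonzero eigenvalue, so all [c_k] vanish by discrete
   Fourier inversion.  Hence [1] and [K(x - x_k) - K(x - x_0)], [k <> 0],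
   form a basis of [SK] with [N] elements. *)

From HB Require Import structures.
From Stdlib Require Import Reals ZArith Lra Lia FunctionalExtensionality.
From mathcomp Require Import all_boot zify.

Set Implicit Arguments.
Unset Strict Implicit.
Unset Printing Implicit Defensive.

Local Open Scope R_scope.

HB.instance Definition _ := Monoid.isComLaw.Build R R0 Rplus
  (fun x y z => esym (Rplus_assoc x y z)) Rplus_comm Rplus_0_l.
HB.instance Definition _ := Monoid.isMulLaw.Build R R0 Rmult Rmult_0_l Rmult_0_r.
HB.instance Definition _ :=
  Monoid.isAddLaw.Build R Rmult Rplus Rmult_plus_distr_r Rmult_plus_distr_l.

Lemma rsum_const (I : finType) (c : R) : \rsum_(i : I) c = INR #|I| * c.
Proof.
rewrite big_const; elim: #|I| => [|m IH]; first by rewrite /=; ring.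
by rewrite iterS IH S_INR; ring.
Qed.

Lemma rsum_opp (I : finType) (F : I -> R) :
  - (\rsum_(i : I) F i) = \rsum_(i : I) (- F i).
Proof. exact: (big_morph Ropp Ropp_plus_distr Ropp_0). Qed.

Definition eqmod2PI (x y : R) : Prop := exists z : Z, x = y + 2 * PI * IZR z.

Lemma eqmod2PI_refl x : eqmod2PI x x.
Proof. by exists 0%Z; ring. Qed.

Lemma eqmod2PI_add x y x' y' :
  eqmod2PI x y -> eqmod2PI x' y' -> eqmod2PI (x + x') (y + y').
Proof. by move=> [z ->] [z' ->]; exists (z + z')%Z; rewrite plus_IZR; ring. Qed.

Lemma eqmod2PI_trans x y w : eqmod2PI x y -> eqmod2PI y w -> eqmod2PI x w.
Proof. by move=> [z ->] [z' ->]; exists (z' + z)%Z; rewrite plus_IZR; ring. Qed.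

Lemma eqmod2PI_mulZ (c : Z) x y :
  eqmod2PI x y -> eqmod2PI (IZR c * x) (IZR c * y).
Proof. by move=> [z ->]; exists (c * z)%Z; rewrite mult_IZR; ring. Qed.

Lemma eqmod2PI_rsum (I : finType) (F G : I -> R) :
  (forall i, eqmod2PI (F i) (G i)) ->
  eqmod2PI (\rsum_(i : I) F i) (\rsum_(i : I) G i).
Proof.
move=> FG; apply: (big_rec2 eqmod2PI); first exact: eqmod2PI_refl.
by move=> i x y _; apply: eqmod2PI_add.
Qed.

Lemma eqmod2PI_INR_modn (a m : nat) (th : R) (r : Z) :
  INR m * th = 2 * PI * IZR r -> eqmod2PI (INR (a %% m)%N * th) (INR a * th).
Proof.
move=> hm; exists (- (Z.of_nat (a %/ m) * r))%Z.
rewrite {2}(divn_eq a m) plus_INR mult_INR opp_IZR mult_IZR -INR_IZR_INZ.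
rewrite Rmult_plus_distr_r Rmult_assoc hm; ring.
Qed.

Lemma eqmod2PI_periodic (f : R -> R) :
  (forall x k, f (x + 2 * INR k * PI) = f x) ->
  forall x y, eqmod2PI x y -> f x = f y.
Proof.
move=> hf x y [z ->]; case: (Z_le_gt_dec 0 z) => hz.
- by rewrite -(Z2Nat.id z hz) -INR_IZR_INZ -(hf y (Z.to_nat z)); f_equal; ring.
- have ->: z = (- Z.of_nat (Z.to_nat (- z)))%Z by lia.
  rewrite opp_IZR -INR_IZR_INZ -(hf _ (Z.to_nat (- z))); f_equal; ring.
Qed.

Lemma cos_eqmod2PI x y : eqmod2PI x y -> cos x = cos y.
Proof. exact: (@eqmod2PI_periodic cos cos_period). Qed.

Lemma sin_eqmod2PI x y : eqmod2PI x y -> sin x = sin y.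
Proof. exact: (@eqmod2PI_periodic sin sin_period). Qed.

Lemma sin_neq0 x : x <> 0 -> - PI < x < PI -> sin x <> 0.
Proof.
move=> x0 hx; case: (Rlt_or_le 0 x) => hs.
- by apply: Rgt_not_eq; apply: sin_gt_0; lra.
- have : 0 < sin (- x) by apply: sin_gt_0; lra.
  by rewrite sin_neg; lra.
Qed.

(* Telescoping via [2 sin(a) cos(b) = sin(b + a) - sin(b - a)]. *)
Lemma sum_cos_arith phi th (T : nat) :
  2 * sin (th / 2) * (\rsum_(t < T) cos (phi + INR t * th)) =
  sin (phi + INR T * th - th / 2) - sin (phi - th / 2).
Proof.
elim: T => [|T IH]; first by rewrite big_ord0 /= Rmult_0_l Rplus_0_r; ring.
rewrite big_ord_recr S_INR /= Rmult_plus_distr_l IH.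
replace (phi + (INR T + 1) * th - th / 2) with (phi + INR T * th + th / 2)
  by field.
rewrite sin_plus [sin (phi + INR T * th - _)]sin_minus; ring.
Qed.

Lemma sum_cos_full_turn phi th (T : nat) (z : Z) :
  INR T * th = 2 * PI * IZR z -> sin (th / 2) <> 0 ->
  \rsum_(t < T) cos (phi + INR t * th) = 0.
Proof.
move=> hT hs; have := sum_cos_arith phi th T.
have -> : phi + INR T * th - th / 2 = phi - th / 2 + 2 * PI * IZR z
  by rewrite -hT; ring.
rewrite (@sin_eqmod2PI (phi - th / 2 + _) (phi - th / 2)); last by exists z.
rewrite Rminus_diag => /Rmult_integral [/Rmult_integral [|] |] //; lra.
Qed.

Lemma dotZ_eqmod2PI d (l : 'I_d -> Z) x y :
  (forall i, eqmod2PI (x i) (y i)) -> eqmod2PI (dotZ l x) (dotZ l y).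
Proof. by move=> xy; apply: eqmod2PI_rsum => i; apply: eqmod2PI_mulZ. Qed.

Lemma dotZ_opp d (l : 'I_d -> Z) x : dotZ l (fun i => - x i) = - dotZ l x.
Proof. by rewrite /dotZ rsum_opp; apply: eq_bigr => i _; ring. Qed.

Section Kernel.

Variables (d : nat) (a : ('I_d -> Z) -> R) (K : ('I_d -> R) -> R).
Hypothesis a_K : is_kernel a K.

Lemma kernel_eq_of_cos x y :
  (forall l, cos (dotZ l x) = cos (dotZ l y)) -> K x = K y.
Proof.
case: a_K => _ [_ cvK] cosxy; apply: (UL_sequence _ _ _ (cvK x)).
have -> : (fun M => box_sum M (fun l => a l * cos (dotZ l x))) =
          (fun M => box_sum M (fun l => a l * cos (dotZ l y))).
  by apply: functional_extensionality => M; apply: eq_bigr => t _; rewrite cosxy.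
exact: cvK.
Qed.

Lemma kernel_periodic x y : (forall i, eqmod2PI (x i) (y i)) -> K x = K y.
Proof.
by move=> xy; apply: kernel_eq_of_cos => l; apply/cos_eqmod2PI/dotZ_eqmod2PI.
Qed.

Lemma kernel_even x : K (fun i => - x i) = K x.
Proof. by apply: kernel_eq_of_cos => l; rewrite dotZ_opp cos_neg. Qed.

End Kernel.

Section Grid.

Variables (d : nat) (n : 'I_d -> nat).
Hypothesis n_gt0 : forall i, (0 < n i)%N.

Lemma double_n_gt0 i : (0 < 2 * n i)%N.
Proof. by rewrite muln_gt0 n_gt0. Qed.

Lemma INR_n_neq0 i : INR (n i) <> 0.
Proof. by apply: not_0_INR; have := n_gt0 i; lia. Qed.

Definition oadd (p q : Omega n) : Omega n :=
  finfun (fun i => Ordinal (ltn_pmod (p i + q i) (double_n_gt0 i))).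
Definition oneg (p : Omega n) : Omega n :=
  finfun (fun i => Ordinal (ltn_pmod (2 * n i - p i) (double_n_gt0 i))).
Definition ozero : Omega n := finfun (fun i => Ordinal (double_n_gt0 i)).
Definition ounit (i0 : 'I_d) (t : nat) : Omega n :=
  finfun (fun i =>
    Ordinal (ltn_pmod (if i == i0 then t else 0%N) (double_n_gt0 i))).

Lemma oaddE p q i : oadd p q i = ((p i + q i) %% (2 * n i))%N :> nat.
Proof. by rewrite ffunE. Qed.
Lemma onegE p i : oneg p i = ((2 * n i - p i) %% (2 * n i))%N :> nat.
Proof. by rewrite ffunE. Qed.
Lemma ozeroE i : ozero i = 0%N :> nat.
Proof. by rewrite ffunE. Qed.
Lemma ounitE i0 t i :
  ounit i0 t i = ((if i == i0 then t else 0%N) %% (2 * n i))%N :> nat.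
Proof. by rewrite ffunE. Qed.

Lemma oadd_inj k : injective (oadd ^~ k).
Proof.
move=> p q /ffunP pq; apply/ffunP => i; apply: val_inj.
move/(congr1 val): (pq i); rewrite /= !oaddE => /eqP; rewrite eqn_modDr.
by rewrite !modn_small // => /eqP.
Qed.

Lemma oneg_inj : injective oneg.
Proof.
move=> p q /ffunP pq; apply/ffunP => i; apply: val_inj.
move/(congr1 val): (pq i); rewrite /= !onegE.
have := ltn_ord (p i); have := ltn_ord (q i).
case: (nat_of_ord (p i)) => [|x]; case: (nat_of_ord (q i)) => [|y] //;
  by rewrite ?subn0 ?modnn => h1 h2; rewrite ?modn_small; lia.
Qed.

Lemma card_Omega_gt0 : (0 < #|Omega n|)%N.
Proof. by apply/card_gt0P; exists ozero. Qed.

Lemma INR_card_Omega_neq0 : INR #|Omega n| <> 0.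
Proof. by apply: not_0_INR; have := card_Omega_gt0; lia. Qed.

Lemma dotN_eqmod2PI (j : Omega n) (x y : 'I_d -> R) :
  (forall i, eqmod2PI (x i) (y i)) -> eqmod2PI (dotN j x) (dotN j y).
Proof.
move=> xy; apply: eqmod2PI_rsum => i.
by rewrite INR_IZR_INZ; apply: eqmod2PI_mulZ.
Qed.

Lemma dotN_add (j : Omega n) (x y : 'I_d -> R) :
  dotN j (fun i => x i + y i) = dotN j x + dotN j y.
Proof. by rewrite /dotN -big_split; apply: eq_bigr => i _ /=; ring. Qed.

Lemma dotN_opp (j : Omega n) (x : 'I_d -> R) :
  dotN j (fun i => - x i) = - dotN j x.
Proof. by rewrite /dotN rsum_opp; apply: eq_bigr => i _ /=; ring. Qed.

Lemma dotN_sub (j : Omega n) (x y : 'I_d -> R) :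
  dotN j (vsub x y) = dotN j x - dotN j y.
Proof. by rewrite /Rminus -dotN_opp -dotN_add. Qed.

Lemma dotN_ozero (x : 'I_d -> R) : dotN ozero x = 0.
Proof. by apply: big1 => i _; rewrite ozeroE Rmult_0_l. Qed.

Lemma xkE (k : Omega n) i : xk k i = INR (k i) * (PI / INR (n i)).
Proof. by rewrite /xk; field; apply: INR_n_neq0. Qed.

Lemma double_n_mul_step i : INR (2 * n i) * (PI / INR (n i)) = 2 * PI * IZR 1.
Proof. by rewrite mult_INR /=; field; apply: INR_n_neq0. Qed.

Lemma xk_oadd p q i : eqmod2PI (xk (oadd p q) i) (xk p i + xk q i).
Proof.
rewrite !xkE oaddE -Rmult_plus_distr_r -plus_INR.
exact: eqmod2PI_INR_modn (double_n_mul_step i).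
Qed.

Lemma xk_oneg p i : eqmod2PI (xk (oneg p) i) (- xk p i).
Proof.
rewrite !xkE onegE.
have [z ->] := eqmod2PI_INR_modn (2 * n i - p i) (double_n_mul_step i).
exists (z + 1)%Z; have /ltnW/leP p_le := ltn_ord (p i).
rewrite minus_INR // mult_INR plus_IZR /=; field; exact: INR_n_neq0.
Qed.

Definition on_grid (y : 'I_d -> R) : Prop :=
  forall i, exists r : Z, INR (2 * n i) * y i = 2 * PI * IZR r.

Lemma dotN_oadd (y : 'I_d -> R) :
  on_grid y -> forall p q, eqmod2PI (dotN (oadd p q) y) (dotN p y + dotN q y).
Proof.
move=> hy p q; rewrite /dotN -big_split; apply: eqmod2PI_rsum => i /=.
rewrite oaddE -Rmult_plus_distr_r -plus_INR.
by have [r hr] := hy i; apply: eqmod2PI_INR_modn hr.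
Qed.

Lemma dotN_ounit (y : 'I_d -> R) :
  on_grid y -> forall i0 t, eqmod2PI (dotN (ounit i0 t) y) (INR t * y i0).
Proof.
move=> hy i0 t.
have -> : INR t * y i0 = \rsum_(i < d) (INR (if i == i0 then t else 0%N) * y i).
  by rewrite (bigD1 i0) //= eqxx big1 => [|i /negbTE -> /=]; ring.
apply: eqmod2PI_rsum => i; rewrite ounitE.
by have [r hr] := hy i; apply: eqmod2PI_INR_modn hr.
Qed.

Lemma on_grid_vsub_xk (m k : Omega n) : on_grid (vsub (xk m) (xk k)).
Proof.
move=> i; exists (Z.of_nat (m i) - Z.of_nat (k i))%Z.
rewrite /vsub !xkE mult_INR minus_IZR -!INR_IZR_INZ /=; field; exact: INR_n_neq0.
Qed.

Lemma sin_half_vsub_xk_neq0 (m k : Omega n) i :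
  m i != k i -> sin (vsub (xk m) (xk k) i / 2) <> 0.
Proof.
move=> mk; have n0 : 0 < INR (n i) by apply/lt_0_INR/ltP.
have bound (p : Omega n) : 0 <= INR (p i) < 2 * INR (n i).
  split; first exact: pos_INR.
  by rewrite -[2]/(INR 2) -mult_INR; apply/lt_INR/ltP.
have [m0 m1] := bound m; have [k0 k1] := bound k.
have mkR : INR (m i) <> INR (k i) by move/INR_eq/val_inj/eqP; rewrite (negbTE mk).
set u := (INR (m i) - INR (k i)) / (2 * INR (n i)).
have u2n : u * (2 * INR (n i)) = INR (m i) - INR (k i) by rewrite /u; field; lra.
have -> : vsub (xk m) (xk k) i / 2 = PI * u by rewrite /vsub !xkE /u; field; lra.
have pi0 := PI_RGT_0; apply: sin_neq0; first by move/Rmult_integral; case; nra.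
by split; nra.
Qed.

Lemma sum_cos_grid_shift (y : 'I_d -> R) : on_grid y -> forall i0 t,
  \rsum_(j : Omega n) cos (dotN j y) =
  \rsum_(j : Omega n) cos (dotN j y + INR t * y i0).
Proof.
move=> hy i0 t; rewrite (reindex_inj (oadd_inj (k := ounit i0 t))).
apply: eq_bigr => j _ /=; apply: cos_eqmod2PI.
apply: eqmod2PI_trans (dotN_oadd hy _ _) _.
exact: eqmod2PI_add (eqmod2PI_refl _) (dotN_ounit hy i0 t).
Qed.

(* Averaging the shifted sums over a full period in the coordinate where
   [m] and [k] differ produces a complete sum of a cosine progression. *)
Lemma sum_cos_grid_offdiag (m k : Omega n) :
  m != k -> \rsum_(j : Omega n) cos (dotN j (vsub (xk m) (xk k))) = 0.
Proof.
move=> mk; have [i0 mk0] : exists i0, m i0 != k i0.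
  apply/existsP; apply: contraR mk; rewrite negb_exists => /forallP mk.
  by apply/eqP/ffunP => i; apply/val_inj/eqP; rewrite -[_ == _]negbK mk.
set y := vsub (xk m) (xk k); have hy := on_grid_vsub_xk m k; have [r hr] := hy i0.
have : INR (2 * n i0) * (\rsum_(j : Omega n) cos (dotN j y)) = 0.
  rewrite -[in INR _](card_ord (2 * n i0)) -rsum_const.
  under eq_bigr => t _ do rewrite (sum_cos_grid_shift hy i0 t).
  rewrite exchange_big /=; apply: big1 => j _.
  by rewrite (sum_cos_full_turn _ hr (sin_half_vsub_xk_neq0 mk0)).
have n2 : INR (2 * n i0) <> 0 by apply: not_0_INR; have := n_gt0 i0; lia.
by case/Rmult_integral.
Qed.

Lemma sum_cos_grid (m k : Omega n) :
  \rsum_(j : Omega n) cos (dotN j (vsub (xk m) (xk k))) =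
  if m == k then INR #|Omega n| else 0.
Proof.
case: eqVneq => [<-|]; last exact: sum_cos_grid_offdiag.
rewrite -[RHS]Rmult_1_r -rsum_const; apply: eq_bigr => j _.
by rewrite dotN_sub Rminus_diag cos_0.
Qed.

Lemma grid_fourier_inversion (v : Omega n -> R) :
  (forall j : Omega n, \rsum_(k : Omega n) (v k * cos (dotN j (xk k))) = 0) ->
  (forall j : Omega n, \rsum_(k : Omega n) (v k * sin (dotN j (xk k))) = 0) ->
  forall m, v m = 0.
Proof.
move=> vcos vsin m.
have : \rsum_(k : Omega n)
         (v k * (\rsum_(j : Omega n) cos (dotN j (vsub (xk m) (xk k))))) = 0.
  transitivity (\rsum_(j : Omega n)
      (cos (dotN j (xk m)) * (\rsum_(k : Omega n) (v k * cos (dotN j (xk k)))) +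
       sin (dotN j (xk m)) * (\rsum_(k : Omega n) (v k * sin (dotN j (xk k))))));
    last by apply: big1 => j _; rewrite vcos vsin; ring.
  under eq_bigr do rewrite big_distrr.
  rewrite exchange_big; apply: eq_bigr => j _ /=.
  rewrite !big_distrr -big_split; apply: eq_bigr => k _ /=.
  by rewrite dotN_sub cos_minus; ring.
under eq_bigr do rewrite sum_cos_grid.
rewrite (bigD1 m) //= eqxx big1 => [|k /negbTE]; last first.
  by rewrite eq_sym => ->; ring.
rewrite Rplus_0_r => /Rmult_integral [//|/INR_card_Omega_neq0 []].
Qed.

Variables (a : ('I_d -> Z) -> R) (K : ('I_d -> R) -> R).
Hypothesis a_K : is_kernel a K.

Lemma kernel_vsub_xk_oadd (p k : Omega n) :
  K (vsub (xk (oadd p k)) (xk k)) = K (xk p).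
Proof.
apply: (kernel_periodic a_K) => i; rewrite /vsub; have [z ->] := xk_oadd p k i.
by exists z; ring.
Qed.

Lemma kernel_xk_oneg (p : Omega n) : K (xk (oneg p)) = K (xk p).
Proof.
rewrite -[K (xk p)](kernel_even a_K).
by apply: (kernel_periodic a_K) => i; apply: xk_oneg.
Qed.

Definition kernel_symbol (j : Omega n) : R :=
  \rsum_(p : Omega n) (cos (dotN j (xk p)) * K (xk p)).

Lemma rho_vzero (j : Omega n) :
  rho K j (@vzero d) = 2 / INR (Ncard n) * kernel_symbol j.
Proof.
rewrite /rho; congr (_ * _); apply: eq_bigr => k _; congr (_ * _).
rewrite -(kernel_even a_K); apply: (kernel_periodic a_K) => i.
by exists 0%Z; rewrite /vsub /vzero; ring.
Qed.

Lemma sum_sin_kernel_eq0 (j : Omega n) :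
  \rsum_(p : Omega n) (sin (dotN j (xk p)) * K (xk p)) = 0.
Proof.
set S := \rsum_(p : Omega n) _; suff : S = - S by lra.
rewrite {1}/S (reindex_inj oneg_inj) rsum_opp; apply: eq_bigr => p _ /=.
rewrite kernel_xk_oneg Ropp_mult_distr_l -sin_neg -dotN_opp; congr (_ * _).
exact/sin_eqmod2PI/dotN_eqmod2PI/xk_oneg.
Qed.

Lemma sum_kernel_shift (g : R -> R) :
  (forall x y, eqmod2PI x y -> g x = g y) -> forall j k : Omega n,
  \rsum_(m : Omega n) (g (dotN j (xk m)) * K (vsub (xk m) (xk k))) =
  \rsum_(p : Omega n) (g (dotN j (xk p) + dotN j (xk k)) * K (xk p)).
Proof.
move=> g_per j k; rewrite (reindex_inj (oadd_inj (k := k))).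
apply: eq_bigr => p _ /=.
rewrite kernel_vsub_xk_oadd -dotN_add; congr (_ * _).
exact/g_per/dotN_eqmod2PI/xk_oadd.
Qed.

Definition grid_eigen (f : ('I_d -> R) -> R) (lam : R) : Prop :=
  forall k : Omega n,
    \rsum_(m : Omega n) (f (xk m) * K (vsub (xk m) (xk k))) = lam * f (xk k).

Lemma grid_eigen_cos (j : Omega n) :
  grid_eigen (fun x => cos (dotN j x)) (kernel_symbol j).
Proof.
move=> k; rewrite (sum_kernel_shift cos_eqmod2PI).
transitivity (kernel_symbol j * cos (dotN j (xk k)) - sin (dotN j (xk k)) *
    (\rsum_(p : Omega n) (sin (dotN j (xk p)) * K (xk p))));
  last by rewrite sum_sin_kernel_eq0; ring.
rewrite /kernel_symbol !big_distrr big_distrl /Rminus rsum_opp -big_split.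
by apply: eq_bigr => p _ /=; rewrite cos_plus; ring.
Qed.

Lemma grid_eigen_sin (j : Omega n) :
  grid_eigen (fun x => sin (dotN j x)) (kernel_symbol j).
Proof.
move=> k; rewrite (sum_kernel_shift sin_eqmod2PI).
transitivity (kernel_symbol j * sin (dotN j (xk k)) + cos (dotN j (xk k)) *
    (\rsum_(p : Omega n) (sin (dotN j (xk p)) * K (xk p))));
  last by rewrite sum_sin_kernel_eq0; ring.
rewrite /kernel_symbol !big_distrr big_distrl -big_split.
by apply: eq_bigr => p _ /=; rewrite sin_plus; ring.
Qed.

Lemma grid_eigen_pairing (f : ('I_d -> R) -> R) (lam : R) (v : Omega n -> R) :
  grid_eigen f lam ->
  \rsum_(m : Omega n)
     (f (xk m) * (\rsum_(k : Omega n) (v k * K (vsub (xk m) (xk k))))) =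
  lam * (\rsum_(k : Omega n) (v k * f (xk k))).
Proof.
move=> eigen; under eq_bigr do rewrite big_distrr.
rewrite exchange_big big_distrr; apply: eq_bigr => k _ /=.
transitivity (v k * (\rsum_(m : Omega n) (f (xk m) * K (vsub (xk m) (xk k)))));
  last by rewrite eigen; ring.
by rewrite big_distrr; apply: eq_bigr => m _ /=; ring.
Qed.

Hypothesis rho0_neq0 : forall j : Omega n, rho K j (@vzero d) <> 0.

Lemma kernel_symbol_neq0 (j : Omega n) : kernel_symbol j <> 0.
Proof.
by move=> h; apply: (rho0_neq0 (j := j)); rewrite rho_vzero h Rmult_0_r.
Qed.

Lemma sk_repr_eq0 (c : R) (v : Omega n -> R) :
  \rsum_(k : Omega n) v k = 0 ->
  (forall x, c + \rsum_(k : Omega n) (v k * K (vsub x (xk k))) = 0) ->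
  c = 0 /\ forall k, v k = 0.
Proof.
move=> v0 hv.
pose S (m : Omega n) := \rsum_(k : Omega n) (v k * K (vsub (xk m) (xk k))).
have S_c m : S m = - c by have := hv (xk m); rewrite /S; lra.
have c0 : c = 0.
  have : \rsum_(m : Omega n) S m = 0.
    have := grid_eigen_pairing v (grid_eigen_cos ozero) => /=.
    under eq_bigr do rewrite dotN_ozero cos_0 Rmult_1_l.
    under [in X in _ = X -> _]eq_bigr do rewrite dotN_ozero cos_0 Rmult_1_r.
    by rewrite v0 Rmult_0_r.
  under eq_bigr do rewrite S_c.
  by rewrite rsum_const => /Rmult_integral [/INR_card_Omega_neq0 []|]; lra.
have coef0 f j : grid_eigen f (kernel_symbol j) ->
    \rsum_(k : Omega n) (v k * f (xk k)) = 0.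
  move=> eigen; have := grid_eigen_pairing v eigen.
  rewrite big1 => [/esym/Rmult_integral [/kernel_symbol_neq0 []|//]|m _].
  by rewrite -/(S m) S_c c0; ring.
split=> //; apply: grid_fourier_inversion => j.
- exact: coef0 (grid_eigen_cos j).
- exact: coef0 (grid_eigen_sin j).
Qed.

(* The differences [K(x - x_k) - K(x - x_0)] absorb the constraint
   [sum_k c_k = 0]. *)
Definition sk_basis (k : Omega n) : ('I_d -> R) -> R :=
  fun x => if k == ozero then 1 else K (vsub x (xk k)) - K (vsub x (xk ozero)).

Definition sk_coef (lam : Omega n -> R) (k : Omega n) : R :=
  if k == ozero then - \big[Rplus/R0]_(k' | k' != ozero) lam k' else lam k.

Lemma sum_sk_coef lam : \rsum_(k : Omega n) sk_coef lam k = 0.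
Proof.
have E : \big[Rplus/R0]_(k | k != ozero) sk_coef lam k =
         \big[Rplus/R0]_(k | k != ozero) lam k.
  by apply: eq_bigr => k /negbTE k0; rewrite /sk_coef k0.
by rewrite (bigD1 ozero) //= E /sk_coef eqxx Rplus_opp_l.
Qed.

Lemma sk_basis_comb lam x :
  \rsum_(k : Omega n) (lam k * sk_basis k x) =
  lam ozero + \rsum_(k : Omega n) (sk_coef lam k * K (vsub x (xk k))).
Proof.
have E1 : \big[Rplus/R0]_(k | k != ozero) (lam k * sk_basis k x) =
    \big[Rplus/R0]_(k | k != ozero) (lam k * K (vsub x (xk k))) +
    - K (vsub x (xk ozero)) * \big[Rplus/R0]_(k | k != ozero) lam k.
  rewrite big_distrr -big_split; apply: eq_bigr => k /negbTE k0.
  by rewrite /sk_basis k0 /=; ring.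
have E2 : \big[Rplus/R0]_(k | k != ozero) (sk_coef lam k * K (vsub x (xk k))) =
    \big[Rplus/R0]_(k | k != ozero) (lam k * K (vsub x (xk k))).
  by apply: eq_bigr => k /negbTE k0; rewrite /sk_coef k0.
rewrite (bigD1 ozero) //= [in RHS](bigD1 ozero) //= E1 E2.
by rewrite /sk_basis /sk_coef !eqxx /=; ring.
Qed.

Lemma SK_sk_comb lam :
  SK n K (fun x => \rsum_(k : Omega n) (lam k * sk_basis k x)).
Proof.
exists (lam ozero), (sk_coef lam); split; first exact: sum_sk_coef.
by move=> x; rewrite sk_basis_comb.
Qed.

Lemma SK_sk_basis k : SK n K (sk_basis k).
Proof.
have [c [ck [ck0 hck]]] := SK_sk_comb (fun k' => if k' == k then 1 else 0).
exists c, ck; split=> // x; rewrite -hck.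
by rewrite (bigD1 k) //= eqxx big1 => [|k' /negbTE ->]; ring.
Qed.

Lemma sk_basis_free lam :
  (forall x, \rsum_(k : Omega n) (lam k * sk_basis k x) = 0) ->
  forall k, lam k = 0.
Proof.
move=> comb0.
have [c0 coef0] := sk_repr_eq0 (sum_sk_coef lam)
  (fun x => etrans (esym (sk_basis_comb lam x)) (comb0 x)).
move=> k; case: (eqVneq k ozero) => [-> //|k0].
by have := coef0 k; rewrite /sk_coef (negbTE k0).
Qed.

Lemma sk_basis_span f : SK n K f -> exists lam : Omega n -> R,
  forall x, f x = \rsum_(k : Omega n) (lam k * sk_basis k x).
Proof.
case=> c [ck [ck0 fck]].
exists (fun k => if k == ozero then c else ck k) => x.
rewrite fck sk_basis_comb eqxx; congr (_ + _).
apply: eq_bigr => k _; congr (_ * _).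
rewrite /sk_coef; case: (eqVneq k ozero) => [->|//].
rewrite (eq_bigr ck) => [|k' /negbTE -> //].
by move: ck0; rewrite (bigD1 ozero) //=; lra.
Qed.

End Grid.

Lemma has_dim_card (X : Type) (V : (X -> R) -> Prop) (T : finType)
    (b : T -> X -> R) :
  (forall t, V (b t)) ->
  (forall lam : T -> R,
     (forall x, \rsum_(t : T) (lam t * b t x) = 0) -> forall t, lam t = 0) ->
  (forall f, V f -> exists lam : T -> R,
     forall x, f x = \rsum_(t : T) (lam t * b t x)) ->
  has_dim V #|T|.
Proof.
have reindex_enum (F : T -> R) :
    \rsum_(t : T) F t = \rsum_(i < #|T|) F (enum_val i).
  by rewrite (reindex (@enum_val T T)) //; apply/onW_bij/enum_val_bij.
move=> Vb free span; exists (fun i => b (enum_val i)); split=> //; split.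
- move=> lam comb0 i; rewrite -[i]enum_valK.
  apply: (free (fun t => lam (enum_rank t))) => x.
  by rewrite reindex_enum -(comb0 x); apply: eq_bigr => j _; rewrite enum_valK.
- move=> f /span [lam flam]; exists (fun i => lam (enum_val i)) => x.
  by rewrite flam reindex_enum.
Qed.

Lemma card_Omega d (n : 'I_d -> nat) : #|Omega n| = Ncard n.
Proof.
rewrite /Omega card_dep_ffun foldrE big_map big_enum /= /Ncard.
rewrite (eq_bigr (fun i => 2 * n i)%N) => [|i _]; last by rewrite card_ord.
by rewrite big_split /= prod_nat_const card_ord.
Qed.

Lemma Ncard_const d (n : 'I_d -> nat) m :
  (forall i, n i = m) -> Ncard n = ((2 * m) ^ d)%N.
Proof.
move=> nm; rewrite /Ncard expnMn (eq_bigr _ (fun i _ => nm i)).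
by rewrite prod_nat_const card_ord.
Qed.

Theorem mainTheorem9 (d : nat) (n : 'I_d -> nat)
    (a : ('I_d -> Z) -> R) (K : ('I_d -> R) -> R) :
  (forall i, (0 < n i)%N) ->
  is_kernel a K ->
  (forall j : Omega n, rho K j (@vzero d) <> R0) ->
  has_dim (SK n K) (Ncard n) /\
  (forall m : nat, (forall i, n i = m) -> has_dim (SK n K) ((2 * m) ^ d)%N).
Proof.
move=> n_gt0 a_K rho0_neq0.
have dimSK : has_dim (SK n K) (Ncard n).
  rewrite -card_Omega; apply: (has_dim_card (SK_sk_basis n_gt0 K)).
  - exact: sk_basis_free a_K rho0_neq0.
  - exact: sk_basis_span.
by split=> // m /Ncard_const <-.
Qed.
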